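(* Let $m,n,s,k$ be integers such that $2\leqslant s\leqslant n$, $2\leqslant k\leqslant m$ and $ms=nk$. Let $c\geqslant 1$, let $\Gamma$ be an abelian group of order $nkc$, and let $d=\gcd(s,k)$. If there exists an $\mathrm{MRS}_\Gamma(k/d,\, s;\, mdc/k)$, then there exists an $\mathrm{MRS}_\Gamma(m,n;s,k;c)$.
   Context: For an abelian group $\Gamma$ of order $abc$, an $\mathrm{MRS}_\Gamma(a,b;c)$ is a collection of $c$ (completely filled) arrays of size $a\times b$ whose entries are the elements of $\Gamma$, each appearing exactly once and in a unique array, such that there are $\omega,\delta\in\Gamma$ with every row sum equal to $\omega$ and every column sum equal to $\delta$. For positive integers $m,n,s,k,c$ and an abelian group $\Gamma$ of order $nkc$, an $\mathrm{MRS}_\Gamma(m,n;s,k;c)$ is a set of $c$ partially filled $m\times n$ arrays (some cells may be empty) with entries in $\Gamma$ such that: every element of $\Gamma$ appears exactly once and in a unique array; in every array each row contains exactly $s$ filled cells and each column contains exactly $k$ filled cells; and there exist $\omega,\delta\in\Gamma$ such that in every array each row sum is $\omega$ and each column sum is $\delta$. *)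

From HB Require Import structures.
From mathcomp Require Import all_boot all_order all_algebra.
Set Implicit Arguments. Unset Strict Implicit. Unset Printing Implicit Defensive.
Import GRing.Theory.
Local Open Scope ring_scope.

(* MRS_Gamma(a,b;c): c completely filled a x b arrays, given by
   A : 'I_c -> 'I_a -> 'I_b -> Gamma (A t i j = entry in row i, column j
   of array t); every element of Gamma appears exactly once overall;
   all row sums equal omega and all column sums equal delta. *)
Definition MRS_full (G : finZmodType) (a b c : nat) : Prop :=
  exists A : 'I_c -> 'I_a -> 'I_b -> G,
    (forall g : G,
        #|[set x : 'I_c * 'I_a * 'I_b | A x.1.1 x.1.2 x.2 == g]| = 1%N) /\
    exists omega delta : G,
      (forall t i, \sum_(j < b) A t i j = omega) /\
      (forall t j, \sum_(i < a) A t i j = delta).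

(* MRS_Gamma(m,n;s,k;c): c partially filled m x n arrays, given by
   A : 'I_c -> 'I_m -> 'I_n -> option Gamma (None = empty cell). *)
Definition MRS_partial (G : finZmodType) (m n s k c : nat) : Prop :=
  exists A : 'I_c -> 'I_m -> 'I_n -> option G,
    (forall g : G,
        #|[set x : 'I_c * 'I_m * 'I_n | A x.1.1 x.1.2 x.2 == Some g]| = 1%N) /\
    (forall t i, #|[set j : 'I_n | A t i j != None]| = s) /\
    (forall t j, #|[set i : 'I_m | A t i j != None]| = k) /\
    exists omega delta : G,
      (forall t i, \sum_(j < n | A t i j != None) odflt 0 (A t i j) = omega) /\
      (forall t j, \sum_(i < m | A t i j != None) odflt 0 (A t i j) = delta).

From mathcomp Require Import all_boot all_order all_algebra.
From mathcomp Require Import ring mxtens.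
Set Implicit Arguments. Unset Strict Implicit. Unset Printing Implicit Defensive.
Import GRing.Theory.

(* Write k = d a and s = d b with a, b coprime; then m = Q a and n = Q b with
   d <= Q, so an m x n array is a Q x Q grid of a x b blocks, and the given
   full arrays are indexed by pairs (t, e) with t in Z/Q and e < c.  Cut the
   a x (d b) array (t, e) into d slices of width b and put slice l into block
   (t, t + l) of the e-th partial array: filled blocks form a cyclic band of d
   block diagonals.  Block row t carries the whole array (t, e), so row sums
   are omega; block column t' carries a column of each array (t' - l, e),
   l < d, so column sums are d delta. *)

Lemma big_codom (R : Type) (idx : R) (op : Monoid.com_law idx) (I J : finType)
    (h : I -> J) (P : pred J) (F : J -> R) :
  injective h -> (forall j, P j = (j \in codom h)) ->
  \big[op/idx]_(j | P j) F j = \big[op/idx]_i F (h i).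
Proof.
move=> /injectiveP inj_h P_h; rewrite (eq_bigl _ _ P_h) -big_uniq //.
by rewrite big_image.
Qed.

Lemma coprime_divn_gcdn s k : 0 < k -> coprime (s %/ gcdn s k) (k %/ gcdn s k).
Proof.
move=> k_gt0; have d_gt0 : 0 < gcdn s k by rewrite gcdn_gt0 k_gt0 orbT.
rewrite /coprime -(eqn_pmul2l d_gt0) muln1 muln_gcdr.
by rewrite ![gcdn s k * _]mulnC !divnK ?dvdn_gcdl ?dvdn_gcdr.
Qed.

Lemma coprime_mul_eq a b m n : 0 < a -> coprime a b -> m * b = n * a ->
  exists2 Q, m = Q * a & n = Q * b.
Proof.
move=> a_gt0 co_ab mb_na.
have a_dvd_m : a %| m by rewrite -(Gauss_dvdl _ co_ab) mb_na dvdn_mull.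
exists (m %/ a); first by rewrite divnK.
apply/eqP; rewrite -(eqn_pmul2r a_gt0) -mb_na -mulnA [b * a]mulnC mulnA divnK //.
Qed.

Lemma mxtens_index_inj m n : injective (@mxtens_index m n).
Proof. exact: can_inj (@mxtens_indexK m n). Qed.

Section BandPlacement.

Variables (G : finZmodType) (a b d q c : nat).
Hypothesis d_le_q1 : d <= q.+1.
Variable A : 'I_(q.+1 * c) -> 'I_a -> 'I_(d * b) -> G.

Local Notation idx := mxtens_index.
Local Notation unidx := mxtens_unindex.

Definition offset (l : 'I_d) : 'I_q.+1 := widen_ord d_le_q1 l.

Lemma offset_inj : injective offset.
Proof. by move=> l l' /(congr1 val) eq_ll'; apply: val_inj. Qed.

(* An index of 'I_(x * y) is read as a pair through mxtens_index: row
   idx (t, r) is row r of block row t, full array idx (t, e) is array (t, e),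
   and its column idx (l, p) is column p of slice l. *)
Definition band (e : 'I_c) (i : 'I_(q.+1 * a)) (j : 'I_(q.+1 * b)) : option G :=
  let (t, r) := unidx i in
  let (t', p) := unidx j in
  omap (fun l : 'I_d => A (idx (t, e)) r (idx (l, p))) (insub (val (t' - t)%R)).

Variant band_spec e t r t' p : option G -> Type :=
  | BandFilled l of t' = (offset l + t)%R :
      band_spec e t r t' p (Some (A (idx (t, e)) r (idx (l, p))))
  | BandEmpty of (forall l, t' != (offset l + t)%R) : band_spec e t r t' p None.

Lemma bandP e t r t' p : band_spec e t r t' p (band e (idx (t, r)) (idx (t', p))).
Proof.
rewrite /band !mxtens_indexK; case: insubP => [l _ val_l | lt_off].
  by apply: BandFilled; apply/eqP; rewrite -subr_eq; apply/eqP/val_inj.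
apply: BandEmpty => l; apply: contra lt_off => /eqP ->.
by rewrite addrK /= ltn_ord.
Qed.

Lemma band_filled e t r t' p l : t' = (offset l + t)%R ->
  band e (idx (t, r)) (idx (t', p)) = Some (A (idx (t, e)) r (idx (l, p))).
Proof.
by move=> ->; case: bandP => [l' /addIr /offset_inj -> // | /(_ l)]; rewrite eqxx.
Qed.

Definition place (x : 'I_(q.+1 * c) * 'I_a * 'I_(d * b)) :
    'I_c * 'I_(q.+1 * a) * 'I_(q.+1 * b) :=
  let: (u, r, col) := x in
  let (t, e) := unidx u in
  let (l, p) := unidx col in
  (e, idx (t, r), idx (offset l + t, p)%R).

Lemma place_idx t e r l p :
  place (idx (t, e), r, idx (l, p)) = (e, idx (t, r), idx (offset l + t, p)%R).
Proof. by rewrite /place !mxtens_indexK. Qed.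

Lemma place_inj : injective place.
Proof.
move=> [[x r] y] [[x' r'] y'].
case: x / (mxtens_indexP x) => t e; case: y / (mxtens_indexP y) => l p.
case: x' / (mxtens_indexP x') => t' e'; case: y' / (mxtens_indexP y') => l' p'.
rewrite !place_idx => /pair_equal_spec[/pair_equal_spec[<-]].
move=> /mxtens_index_inj/pair_equal_spec[<- <-].
by move=> /mxtens_index_inj/pair_equal_spec[/addIr/offset_inj <- <-].
Qed.

Lemma band_fiber (g : G) :
  [set x | band x.1.1 x.1.2 x.2 == Some g] =
  place @: [set y | A y.1.1 y.1.2 y.2 == g].
Proof.
apply/setP => -[[e i] j].
case: i / (mxtens_indexP i) => t r; case: j / (mxtens_indexP j) => t' p.
rewrite inE /=; case: bandP => [l -> | off_t'].
  by rewrite -place_idx mem_imset ?inE //; exact: place_inj.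
apply/esym/imsetP => -[[[x r'] y] _].
case: x / (mxtens_indexP x) => t0 e0; case: y / (mxtens_indexP y) => l p0.
rewrite place_idx => /pair_equal_spec[/pair_equal_spec[_]].
move=> /mxtens_index_inj/pair_equal_spec[<- _].
move=> /mxtens_index_inj/pair_equal_spec[eq_t' _].
by move: (off_t' l); rewrite eq_t' eqxx.
Qed.

Definition row_cell (t : 'I_q.+1) (u : 'I_d * 'I_b) : 'I_(q.+1 * b) :=
  idx (offset u.1 + t, u.2)%R.

Definition col_cell (t' : 'I_q.+1) (u : 'I_d * 'I_a) : 'I_(q.+1 * a) :=
  idx (t' - offset u.1, u.2)%R.

Lemma row_cell_inj t : injective (row_cell t).
Proof.
by move=> [l p] [l' p'] /mxtens_index_inj/pair_equal_spec/=[/addIr/offset_inj -> ->].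
Qed.

Lemma col_cell_inj t' : injective (col_cell t').
Proof.
by move=> [l r] [l' r'] /mxtens_index_inj/pair_equal_spec/=[/subrI/offset_inj -> ->].
Qed.

Lemma band_row_support e t r j :
  (band e (idx (t, r)) j != None) = (j \in codom (row_cell t)).
Proof.
case: j / (mxtens_indexP j) => t' p.
apply/idP/codomP => [| [[l p'] /mxtens_index_inj/pair_equal_spec[-> ->]]].
  by case: bandP => // l ->; exists (l, p).
by rewrite (band_filled _ _ _ (l := l)).
Qed.

Lemma band_col_support e t' p i :
  (band e i (idx (t', p)) != None) = (i \in codom (col_cell t')).
Proof.
case: i / (mxtens_indexP i) => t r.
apply/idP/codomP => [| [[l r'] /mxtens_index_inj/pair_equal_spec[-> ->]]].
  by case: bandP => // l ->; exists (l, r); rewrite /col_cell /= addrC addKr.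
by rewrite (band_filled _ _ _ (l := l)) // addrC subrK.
Qed.

Lemma card_band_row e i : #|[set j | band e i j != None]| = d * b.
Proof.
case: i / (mxtens_indexP i) => t r.
rewrite (eq_card (_ : _ =i codom (row_cell t))) => [|j]; last first.
  by rewrite inE band_row_support.
by rewrite card_codom ?card_prod ?card_ord //; exact: row_cell_inj.
Qed.

Lemma card_band_col e j : #|[set i | band e i j != None]| = d * a.
Proof.
case: j / (mxtens_indexP j) => t' p.
rewrite (eq_card (_ : _ =i codom (col_cell t'))) => [|i]; last first.
  by rewrite inE band_col_support.
by rewrite card_codom ?card_prod ?card_ord //; exact: col_cell_inj.
Qed.

Lemma sum_band_row e t r :
  (\sum_(j | band e (idx (t, r)) j != None) odflt 0 (band e (idx (t, r)) j) =
   \sum_(col < d * b) A (idx (t, e)) r col)%R.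
Proof.
rewrite (big_codom _ _ (@row_cell_inj t) (band_row_support e t r)).
rewrite (reindex (@mxtens_index _ _)) /=; last first.
  by exists (@mxtens_unindex _ _) => u _; rewrite (mxtens_indexK, mxtens_unindexK).
by apply: eq_bigr => -[l p] _; rewrite (band_filled _ _ _ (l := l)).
Qed.

Lemma sum_band_col e t' p :
  (\sum_(i | band e i (idx (t', p)) != None) odflt 0 (band e i (idx (t', p))) =
   \sum_(l < d) \sum_(r < a) A (idx (t' - offset l, e)) r (idx (l, p)))%R.
Proof.
rewrite (big_codom _ _ (@col_cell_inj t') (band_col_support e t' p)) pair_bigA.
by apply: eq_bigr => -[l r] _; rewrite (band_filled _ _ _ (l := l)) // addrC subrK.
Qed.

End BandPlacement.

Lemma MRS_partial_of_full (G : finZmodType) (a b d q c : nat) : d <= q.+1 ->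
  MRS_full G a (d * b) (q.+1 * c) ->
  MRS_partial G (q.+1 * a) (q.+1 * b) (d * b) (d * a) c.
Proof.
move=> d_le [A [A_uniq [omega [delta [A_row A_col]]]]].
exists (band A); split.
  by move=> g; rewrite band_fiber card_imset //; exact: place_inj.
split; first exact: card_band_row.
split; first exact: card_band_col.
exists omega, (delta *+ d)%R; split.
  move=> e i; case: i / (mxtens_indexP i) => t r.
  rewrite (sum_band_row d_le); exact: A_row.
move=> e j; case: j / (mxtens_indexP j) => t' p.
rewrite (sum_band_col d_le) (eq_bigr (fun=> delta)) => [|l _]; last exact: A_col.
by rewrite sumr_const card_ord.
Qed.

Theorem lemma5p11 (m n s k c : nat) (G : finZmodType) :
  (2 <= s <= n)%N -> (2 <= k <= m)%N -> (m * s = n * k)%N -> (1 <= c)%N ->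
  #|G| = (n * k * c)%N ->
  let d := gcdn s k in
  MRS_full G (k %/ d) s (m * d * c %/ k) ->
  MRS_partial G m n s k c.
Proof.
move=> /andP[s_ge2 _] /andP[k_ge2 k_le_m] ms_nk _ _ d.
have d_gt0 : 0 < d by rewrite gcdn_gt0 (ltnW s_ge2).
set a := k %/ d; set b := s %/ d.
have Ek : k = d * a by rewrite mulnC divnK ?dvdn_gcdr.
have Es : s = d * b by rewrite mulnC divnK ?dvdn_gcdl.
have a_gt0 : 0 < a by rewrite divn_gt0 // dvdn_leq ?dvdn_gcdr ?(ltnW k_ge2).
have [Q Em En] : exists2 Q, m = Q * a & n = Q * b.
  apply: coprime_mul_eq a_gt0 _ _.
    by rewrite coprime_sym coprime_divn_gcdn ?(ltnW k_ge2).
  by apply/eqP; rewrite -(eqn_pmul2l d_gt0) mulnCA -Es mulnCA -Ek ms_nk.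
have d_le_Q : d <= Q by rewrite -(leq_pmul2r a_gt0) -Em -Ek.
case: Q d_le_Q Em En => [|q] d_le_Q Em En; first by rewrite leqNgt d_gt0 in d_le_Q.
have -> : m * d * c %/ k = q.+1 * c.
  have -> : m * d * c = q.+1 * c * k by rewrite Em Ek; ring.
  by rewrite mulnK // Ek muln_gt0 d_gt0.
by rewrite Es Ek Em En; exact: MRS_partial_of_full.
Qed.
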